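(* Let $K,N\ge 1$, $T\ge1$, let $c_1^M,\dots,c_K^M>0$ with $C^M=\sum_kc_k^M$, and let $\mathcal{F}_c=\{c\in\mathbb{R}^N: c\ge 0,\ \sum_{i=1}^Nc_i\le C^M\}$. For each round $t=1,\dots,T$ let (possibly adversarially chosen) data $r_1(t)<\dots<r_K(t)$ with $0\le r_k(t)\le r_{\max}$, prices $0\le p_i(t)<p_{\max}$, and deployment ratios $\epsilon(t)\in[0,1]^N$ be given, and define for $c\in\mathcal{F}_c$ $$\mathrm{cost}_t(c)=\sum_{k<k_c}(r_k(t)-r_{k_c}(t))c_k^M+\sum_{i=1}^Nc_i\big(r_{k_c}(t)\epsilon_i(t)-p_i(t)\big),$$ where $k_c=\min\{q:\sum_i\epsilon_i(t)c_i\le\sum_{k=1}^qc_k^M\}$. Let $D=C^M$ if $N=1$ and $D=\sqrt2\,C^M$ if $N\ge2$, and $G=\sqrt N\max\{r_{\max},p_{\max}\}$. Run online projected subgradient descent: $c(1)\in\mathcal{F}_c$ arbitrary and $c(t+1)=\mathrm{proj}_{\mathcal{F}_c}\big(c(t)-\eta_t g_t\big)$ with $g_t=\big(r_{k_c}(t)\epsilon_i(t)-p_i(t)\big)_{i=1}^N$ (the critical type $k_c$ evaluated at $c(t)$), $\eta_t=\frac{D}{G\sqrt t}$, where $\mathrm{proj}_{\mathcal{F}_c}$ is Euclidean projection and $c(t)$ is chosen before round-$t$ data are revealed. Then the regret $$R_T=\sum_{t=1}^T\mathrm{cost}_t(c(t))-\min_{c\in\mathcal{F}_c}\sum_{t=1}^T\mathrm{cost}_t(c)$$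 satisfies $R_T\le\frac32GD\sqrt T\le 3C^M\sqrt{\frac{TN}{2}}\max\{r_{\max},p_{\max}\}$.
   Context: Interpretation: a cryptominer with $K$ machine types (capacities $c_k^M$, per-unit net mining rewards $r_k(t)$) chooses each round capacities $c_i(t)$ committed to $N$ ancillary service programs with prices $p_i(t)$ and deployment ratios $\epsilon_i(t)$; $\mathrm{cost}_t$ is its optimal net cost in round $t$, and $g_t$ is a subgradient of $\mathrm{cost}_t$ at $c(t)$. *)

From mathcomp Require Import all_boot all_order all_algebra.
From mathcomp Require Import reals.
Set Implicit Arguments. Unset Strict Implicit. Unset Printing Implicit Defensive.
Import Order.TTheory GRing.Theory Num.Theory.
Local Open Scope ring_scope.

Section Defs.
Variable R : realType.

(* Machine types are indexed 0..K-1 (paper: 1..K); cM k = c^M_{k+1}. *)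
Definition CMtot (K : nat) (cM : nat -> R) : R := \sum_(k < K) cM k.

Definition Fc (N K : nat) (cM : nat -> R) (c : 'I_N -> R) : Prop :=
  (forall i, 0 <= c i) /\ \sum_(i < N) c i <= CMtot K cM.

(* Critical type (0-indexed): the least q in {0..K-1} with
   sum_i eps_i c_i <= sum_{k <= q} cM k, i.e. paper's k_c - 1. *)
Definition kcrit (N K : nat) (cM : nat -> R) (eps : 'I_N -> R) (c : 'I_N -> R)
  : nat :=
  find (fun q => \sum_(i < N) eps i * c i <= \sum_(k < q.+1) cM k) (iota 0 K).

Definition cost (N K : nat) (cM : nat -> R) (r : nat -> R)
  (eps p : 'I_N -> R) (c : 'I_N -> R) : R :=
  let kc := kcrit K cM eps c in
  \sum_(k < K | (k < kc)%N) (r k - r kc) * cM k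
  + \sum_(i < N) c i * (r kc * eps i - p i).

Definition subgrad (N K : nat) (cM : nat -> R) (r : nat -> R)
  (eps p : 'I_N -> R) (c : 'I_N -> R) : 'I_N -> R :=
  fun i => r (kcrit K cM eps c) * eps i - p i.

Definition sqnorm (N : nat) (x : 'I_N -> R) : R := \sum_(i < N) x i ^+ 2.

Definition is_proj (N : nat) (F : ('I_N -> R) -> Prop) (x y : 'I_N -> R) : Prop :=
  F y /\ forall z, F z ->
    sqnorm (fun i => x i - y i) <= sqnorm (fun i => x i - z i).

Definition Dconst (N K : nat) (cM : nat -> R) : R :=
  if N == 1%N then CMtot K cM else Num.sqrt 2 * CMtot K cM.

Definition Gconst (N : nat) (rmax pmax : R) : R :=
  Num.sqrt (N%:R) * Num.max rmax pmax.

Definition eta (N K : nat) (cM : nat -> R) (rmax pmax : R) (t : nat) : R :=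
  Dconst N K cM / (Gconst N rmax pmax * Num.sqrt (t%:R)).

End Defs.

(* Each cost_t is the pointwise maximum over q < K of the affine functions
   c |-> sum_(k<q) (r_k - r_q) c^M_k + r_q sum_i eps_i c_i - sum_i p_i c_i,
   and the critical type attains the maximum: the pieces increase in q up to
   k_c and decrease after it.  Hence cost_t is convex on F_c and g_t is a
   subgradient, and Zinkevich's analysis of projected online gradient descent
   applies.  Since projection onto the convex set F_c is nonexpansive,
     <g_t, c(t) - c> <= (|c(t) - c|^2 - |c(t+1) - c|^2) / (2 eta_t) + eta_t |g_t|^2 / 2;
   summing with the nondecreasing weights 1 / (2 eta_t), using |x - y| <= D on F_c,
   |g_t| <= G and sum_(t<=T) 1/sqrt t <= 2 sqrt T, gives regret
   <= G D sqrt T / 2 + G D sqrt T. *)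

From mathcomp Require Import all_boot all_order all_algebra.
From mathcomp Require Import reals.
From mathcomp Require Import ring lra zify.
Import Order.TTheory GRing.Theory Num.Theory.
Set Implicit Arguments. Unset Strict Implicit. Unset Printing Implicit Defensive.
Local Open Scope ring_scope.

Section EuclideanProjection.
Variables (R : realType) (N : nat).
Implicit Types (u v w x y z : 'I_N -> R) (F : ('I_N -> R) -> Prop).

Definition dot u v : R := \sum_(i < N) u i * v i.

Definition convex F := forall y z (l : R), F y -> F z -> 0 <= l <= 1 ->
  F (fun i => y i + l * (z i - y i)).

Lemma sqnorm_ge0 v : 0 <= sqnorm v.
Proof. by apply: sumr_ge0 => i _; rewrite sqr_ge0. Qed.

Lemma sqnorm_sub_scaled w u v (l : R) : (forall i, w i = u i - l * v i) ->
  sqnorm w = sqnorm u - 2 * l * dot v u + l ^+ 2 * sqnorm v.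
Proof.
move=> wE; rewrite /sqnorm /dot !mulr_sumr -sumrB -big_split /=.
by apply: eq_bigr => i _; rewrite wE; ring.
Qed.

Lemma proj_obtuse F x y z : convex F -> is_proj F x y -> F z ->
  dot (fun i => z i - y i) (fun i => x i - y i) <= 0.
Proof.
move=> F_convex [Fy y_min] Fz.
set v := fun i => z i - y i; set w := fun i => x i - y i.
set d := dot v w; set n := sqnorm v.
have segment_worse (l : R) : 0 <= l <= 1 -> 0 <= l * (l * n - 2 * d).
  move=> l01; have := y_min _ (F_convex _ _ _ Fy Fz l01).
  rewrite [X in _ <= X](@sqnorm_sub_scaled _ w v l) => [|i]; last by rewrite /w /v; ring.
  rewrite -/d -/n; lra.
rewrite leNgt; apply/negP => d_gt0.
have n_ge0 : 0 <= n := sqnorm_ge0 v.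
have dn_gt0 : 0 < d + n by lra.
(* the point of the segment at parameter d / (d + n) is strictly closer to x *)
have l_ge0 : 0 <= d / (d + n) by rewrite divr_ge0 // ltW.
have l_le1 : d / (d + n) <= 1 by rewrite ler_pdivrMr // mul1r; lra.
have := segment_worse (d / (d + n)); rewrite l_ge0 l_le1 => /(_ isT).
apply/negP; rewrite -ltNge.
have -> : d / (d + n) * (d / (d + n) * n - 2 * d)
  = - (d / (d + n)) ^+ 2 * (2 * d + n) by field; rewrite gt_eqF.
by rewrite mulNr oppr_lt0 mulr_gt0 ?exprn_gt0 ?divr_gt0 //; lra.
Qed.

Lemma proj_nonexpansive F x y z : convex F -> is_proj F x y -> F z ->
  sqnorm (fun i => y i - z i) <= sqnorm (fun i => x i - z i).
Proof.
move=> F_convex proj_y Fz; have := proj_obtuse F_convex proj_y Fz.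
set v := fun i => z i - y i; set w := fun i => x i - y i => obtuse.
rewrite [X in _ <= X](@sqnorm_sub_scaled _ w v 1) => [|i]; last by rewrite /w /v; ring.
have -> : sqnorm (fun i => y i - z i) = sqnorm v.
  by apply: eq_bigr => i _; rewrite /v; ring.
have := sqnorm_ge0 w; lra.
Qed.

End EuclideanProjection.

Section FeasibleSet.
Variables (R : realType) (N K : nat) (cM : nat -> R).
Implicit Types (x y : 'I_N -> R).

Lemma Fc_convex : convex (@Fc R N K cM).
Proof.
move=> y z l [y_ge0 y_le] [z_ge0 z_le] /andP[l_ge0 l_le1]; split.
  move=> i; have := y_ge0 i; have := z_ge0 i => zi yi.
  have : 0 <= l * z i by rewrite mulr_ge0.
  have : 0 <= (1 - l) * y i by rewrite mulr_ge0 // subr_ge0.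
  lra.
rewrite big_split /= -mulr_sumr sumrB.
set Y := \sum_i y i in y_le *; set Z := \sum_i z i in z_le *.
have : 0 <= l * (CMtot K cM - Z) by rewrite mulr_ge0 // subr_ge0.
have : 0 <= (1 - l) * (CMtot K cM - Y) by rewrite mulr_ge0 // subr_ge0.
lra.
Qed.

Lemma sum_sqr_le_sqr_sum x : (forall i, 0 <= x i) -> sqnorm x <= (\sum_i x i) ^+ 2.
Proof.
move=> x_ge0; rewrite /sqnorm expr2 mulr_suml; apply: ler_sum => i _.
rewrite expr2 ler_wpM2l // (bigD1 i) //= lerDl.
exact: sumr_ge0.
Qed.

Lemma Fc_diam x y : Fc K cM x -> Fc K cM y ->
  sqnorm (fun i => x i - y i) <= Dconst N K cM ^+ 2.
Proof.
move=> [x_ge0 x_le] [y_ge0 y_le]; rewrite /Dconst.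
have sx_ge0 : 0 <= \sum_i x i by apply: sumr_ge0.
have sy_ge0 : 0 <= \sum_i y i by apply: sumr_ge0.
case: eqP => [N1|_].
  subst N; rewrite /sqnorm big_ord1; rewrite !big_ord1 in x_le sx_ge0 y_le sy_ge0.
  have := x_ge0 ord0; have := y_ge0 ord0; nra.
rewrite exprMn sqr_sqrtr //.
apply: (@le_trans _ _ (sqnorm x + sqnorm y)).
  rewrite /sqnorm -big_split; apply: ler_sum => i _ /=.
  have := x_ge0 i; have := y_ge0 i; nra.
have := sum_sqr_le_sqr_sum x_ge0; have := sum_sqr_le_sqr_sum y_ge0; nra.
Qed.

Lemma Fc_load_le (eps c : 'I_N -> R) : Fc K cM c -> (forall i, 0 <= eps i <= 1) ->
  dot eps c <= CMtot K cM.
Proof.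
move=> [c_ge0 c_le] eps01; apply: le_trans c_le; apply: ler_sum => i _.
have := c_ge0 i; have := eps01 i => /andP[]; nra.
Qed.

End FeasibleSet.

Section CriticalType.
Variables (R : realType) (N K : nat) (cM : nat -> R).
Hypothesis K_gt0 : (0 < K)%N.
Implicit Types (eps c : 'I_N -> R).

Lemma kcrit_spec eps c : dot eps c <= CMtot K cM ->
  [/\ (kcrit K cM eps c < K)%N, dot eps c <= CMtot (kcrit K cM eps c).+1 cM
    & forall q, (q < kcrit K cM eps c)%N -> CMtot q.+1 cM < dot eps c].
Proof.
move=> load_le; rewrite /kcrit.
set P := fun q => _ <= _.
have hasP : has P (iota 0 K).
  apply/hasP; exists K.-1; first by rewrite mem_iota; lia.
  by rewrite /P prednK.
have kc_lt : (find P (iota 0 K) < K)%N.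
  by rewrite -[X in (_ < X)%N](size_iota 0 K) -has_find.
split=> //.
- by have := nth_find 0%N hasP; rewrite nth_iota.
- move=> q q_lt; have := before_find 0%N q_lt.
  rewrite nth_iota; last lia.
  by rewrite /P add0n => /negbT; rewrite -ltNge.
Qed.

Lemma sqnorm_subgrad_le (r : nat -> R) eps (p : 'I_N -> R) c (rmax pmax : R) :
  dot eps c <= CMtot K cM ->
  (forall k, (k < K)%N -> 0 <= r k <= rmax) -> (forall i, 0 <= p i <= pmax) ->
  (forall i, 0 <= eps i <= 1) ->
  sqnorm (subgrad K cM r eps p c) <= Gconst N rmax pmax ^+ 2.
Proof.
move=> load_le r_bnd p_bnd eps01; have [kc_lt _ _] := kcrit_spec load_le.
set M := Num.max rmax pmax.
apply: (@le_trans _ _ (\sum_(i < N) M ^+ 2)); last first.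
  by rewrite sumr_const card_ord /Gconst exprMn sqr_sqrtr // mulr_natl.
apply: ler_sum => i _; rewrite /subgrad.
have [rM pM] : rmax <= M /\ pmax <= M by rewrite !le_max !lexx orbT.
have := r_bnd _ kc_lt; have := eps01 i; have := p_bnd i.
set rk := r _; move=> /andP[? ?] /andP[? ?] /andP[? ?].
have : 0 <= rk * eps i <= M by apply/andP; split; nra.
move=> /andP[]; nra.
Qed.

End CriticalType.

Section CostSubgradient.
Variables (R : realType) (K : nat) (cM r : nat -> R).
Hypothesis cM_ge0 : forall k, (k < K)%N -> 0 <= cM k.
Hypothesis r_nondecr : forall k, (k.+1 < K)%N -> r k <= r k.+1.

Definition cost_piece q (s : R) : R :=
  \sum_(k < K | (k < q)%N) (r k - r q) * cM k + r q * s.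

Lemma cost_pieceE q s : (q <= K)%N ->
  cost_piece q s = \sum_(k < q) r k * cM k - r q * CMtot q cM + r q * s.
Proof.
move=> q_le; rewrite /cost_piece /CMtot.
rewrite -(@big_ord_widen _ _ _ q K (fun k => (r k - r q) * cM k) q_le).
by rewrite mulr_sumr -sumrB; congr (_ + _); apply: eq_bigr => k _; ring.
Qed.

Lemma cost_piece_succ q s : (q.+1 < K)%N ->
  cost_piece q.+1 s - cost_piece q s = (r q.+1 - r q) * (s - CMtot q.+1 cM).
Proof.
move=> q_lt; rewrite !cost_pieceE ?(ltnW q_lt) ?(ltnW (ltnW q_lt)) //.
by rewrite /CMtot !big_ord_recr /=; ring.
Qed.

Lemma CMtot_mono m n : (m <= n <= K)%N -> CMtot m cM <= CMtot n cM.
Proof.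
move=> /andP[mn nK]; rewrite /CMtot -!(big_mkord xpredT).
rewrite (big_cat_nat (leq0n m) mn) /= lerDl.
by rewrite big_nat_cond; apply: sumr_ge0 => k /andP[/andP[_ kn] _]; apply: cM_ge0; lia.
Qed.

(* cost_t is the maximum of the affine pieces, attained at the critical type; hence convexity. *)
Lemma cost_piece_le_crit s a b : (a < K)%N -> (b < K)%N -> s <= CMtot b.+1 cM ->
  (forall q, (q < b)%N -> CMtot q.+1 cM < s) -> cost_piece a s <= cost_piece b s.
Proof.
move=> a_lt b_lt s_le s_gt.
have telescope m n : (m <= n < K)%N -> cost_piece n s - cost_piece m s
    = \sum_(m <= q < n) (r q.+1 - r q) * (s - CMtot q.+1 cM).
  move=> /andP[mn n_lt]; symmetry.
  apply: (telescope_sumr_eq (cost_piece^~ s) _ mn) => q /andP[_ qn].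
  by rewrite cost_piece_succ //; lia.
have r_step q : (q.+1 < K)%N -> 0 <= r q.+1 - r q by move=> ?; rewrite subr_ge0 r_nondecr.
rewrite -subr_ge0; case: (leqP a b) => [ab|ba].
  rewrite telescope ?ab // big_nat_cond; apply: sumr_ge0 => q /andP[/andP[_ qb] _].
  by apply: mulr_ge0; [apply: r_step; lia | rewrite subr_ge0 ltW ?s_gt].
rewrite -opprB oppr_ge0 telescope ?a_lt ?(ltnW ba) // big_nat_cond.
apply: sumr_le0 => q /andP[/andP[bq qa] _].
apply: mulr_ge0_le0; first by apply: r_step; lia.
by rewrite subr_le0; apply: le_trans s_le (CMtot_mono _); lia.
Qed.

Lemma costE N (eps p c : 'I_N -> R) :
  cost K cM r eps p c = cost_piece (kcrit K cM eps c) (dot eps c) - dot p c.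
Proof.
rewrite /cost /cost_piece /dot /= -addrA; congr (_ + _).
by rewrite mulr_sumr -sumrB; apply: eq_bigr => i _; ring.
Qed.

Lemma cost_subgrad_ineq N (eps p c c' : 'I_N -> R) : (0 < K)%N ->
  dot eps c <= CMtot K cM -> dot eps c' <= CMtot K cM ->
  cost K cM r eps p c - cost K cM r eps p c'
    <= dot (subgrad K cM r eps p c) (fun i => c i - c' i).
Proof.
move=> K_gt0 load_c load_c'.
have [a_lt _ _] := kcrit_spec K_gt0 load_c.
have [b_lt s'_le s'_gt] := kcrit_spec K_gt0 load_c'.
have := cost_piece_le_crit a_lt b_lt s'_le s'_gt.
have subgradE : dot (subgrad K cM r eps p c) (fun i => c i - c' i)
    = r (kcrit K cM eps c) * (dot eps c - dot eps c') - (dot p c - dot p c').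
  rewrite /dot /subgrad -!sumrB mulr_sumr -sumrB; apply: eq_bigr => i _; ring.
rewrite subgradE !costE /cost_piece; lra.
Qed.

End CostSubgradient.

Lemma CMtot_gt0 (R : realType) K (cM : nat -> R) : (0 < K)%N ->
  (forall k, (k < K)%N -> 0 < cM k) -> 0 < CMtot K cM.
Proof.
move=> K_gt0 cM_gt0; rewrite /CMtot (bigD1 (Ordinal K_gt0)) //=.
rewrite ltr_wpDr ?cM_gt0 //; apply: sumr_ge0 => k _; exact/ltW/cM_gt0.
Qed.

Lemma sum_weighted_telescope (R : realDomainType) (a d : nat -> R) (B : R) n :
  (0 < n)%N -> 0 <= a 1%N -> (forall t, a t <= a t.+1) ->
  (forall t, (1 <= t <= n)%N -> d t <= B) ->
  \sum_(1 <= t < n.+1) a t * (d t - d t.+1) <= a n * (B - d n.+1).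
Proof.
move=> + a1_ge0 a_nondecr; elim: n => [//|[|n] IH] _ d_le.
  by rewrite big_nat1; have := d_le 1%N isT; nra.
rewrite big_nat_recr //=.
have := IH isT (fun t t_range => d_le t ltac:(lia)).
have : 0 <= (a n.+2 - a n.+1) * (B - d n.+2).
  by rewrite mulr_ge0 // subr_ge0 ?a_nondecr // d_le ?leqnn.
nra.
Qed.

Lemma sum_inv_sqrt_le (R : rcfType) n :
  \sum_(1 <= t < n.+1) (Num.sqrt (t%:R : R))^-1 <= 2 * Num.sqrt n%:R.
Proof.
elim: n => [|n IH]; first by rewrite big_geq // sqrtr0 mulr0.
rewrite big_nat_recr //=.
set a := Num.sqrt (n%:R : R) in IH *; set b := Num.sqrt (n.+1%:R : R).
have a_ge0 : 0 <= a by apply: sqrtr_ge0.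
have b_gt0 : 0 < b by rewrite sqrtr_gt0 ltr0n.
have a2 : a ^+ 2 = n%:R by rewrite sqr_sqrtr // ler0n.
have b2 : b ^+ 2 = n%:R + 1 by rewrite sqr_sqrtr // ?ler0n // -natr1.
have bVb : b * b^-1 = 1 by rewrite mulfV // gt_eqF.
(* b^-1 <= 2 (b - a) is b^-1 (a - b)^2 >= 0, using b^2 - a^2 = 1 *)
have : 0 <= b^-1 * (a - b) ^+ 2 by rewrite mulr_ge0 ?sqr_ge0 // invr_ge0 ltW.
nra.
Qed.

Section OnlineGradientDescent.
Variables (R : realType) (N T : nat) (F : ('I_N -> R) -> Prop) (D G : R).
Variables (loss : nat -> ('I_N -> R) -> R) (g c : nat -> 'I_N -> R).
Hypotheses (F_convex : convex F) (D_gt0 : 0 < D) (G_gt0 : 0 < G).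
Hypothesis F_diam : forall x y, F x -> F y -> sqnorm (fun i => x i - y i) <= D ^+ 2.
Hypothesis F_c1 : F (c 1%N).
Hypothesis c_step : forall t, (1 <= t < T)%N ->
  is_proj F (fun i => c t i - D / (G * Num.sqrt t%:R) * g t i) (c t.+1).
Hypothesis g_bound : forall t, (1 <= t <= T)%N -> F (c t) -> sqnorm (g t) <= G ^+ 2.
Hypothesis g_subgrad : forall t u, (1 <= t <= T)%N -> F (c t) -> F u ->
  loss t (c t) - loss t u <= dot (g t) (fun i => c t i - u i).

Lemma ogd_feasible t : (1 <= t <= T)%N -> F (c t).
Proof.
elim: t => [//|t IH] t_range; case: (posnP t) => [-> //|t_gt0].
have t_step : (1 <= t < T)%N by rewrite t_gt0; case/andP: t_range.
exact: (c_step t_step).1.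
Qed.

Variables (u : 'I_N -> R).
Hypothesis F_u : F u.

(* c (T+1) is not constrained, so the distance is cut off after the horizon *)
Let dist t := if (t <= T)%N then sqnorm (fun i => c t i - u i) else 0.
Let weight t := G * Num.sqrt t%:R / (2 * D).

Lemma ogd_round t : (1 <= t <= T)%N ->
  loss t (c t) - loss t u <= weight t * (dist t - dist t.+1) + D * G / 2 / Num.sqrt t%:R.
Proof.
move=> t_range; set eta := D / (G * Num.sqrt t%:R).
have Fct := ogd_feasible t_range.
have st_gt0 : 0 < Num.sqrt (t%:R : R) by rewrite sqrtr_gt0 ltr0n; case/andP: t_range.
have eta_gt0 : 0 < eta by rewrite divr_gt0 ?mulr_gt0.
have weight_gt0 : 0 < weight t by rewrite divr_gt0 ?mulr_gt0.
have eta_weight : eta * weight t = 1 / 2 by rewrite /eta /weight; field; rewrite !gt_eqF.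
have eta_G : eta * G ^+ 2 / 2 = D * G / 2 / Num.sqrt t%:R.
  by rewrite /eta; field; rewrite !gt_eqF.
set X := dot (g t) (fun i => c t i - u i).
have step_le : 2 * eta * X <= dist t - dist t.+1 + eta ^+ 2 * G ^+ 2.
  have next_le : dist t.+1 <= sqnorm (fun i => c t i - u i) - 2 * eta * X
      + eta ^+ 2 * sqnorm (g t).
    rewrite -(@sqnorm_sub_scaled _ _ (fun i => c t i - eta * g t i - u i)) => [|i]; last ring.
    rewrite /dist; case: ifP => [t_lt|_]; last exact: sqnorm_ge0.
    have t_step : (1 <= t < T)%N by case/andP: t_range => ->.
    exact: proj_nonexpansive F_convex (c_step t_step) F_u.
  have dist_t : dist t = sqnorm (fun i => c t i - u i).
    by rewrite /dist; case/andP: t_range => _ ->.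
  have := ler_wpM2l (sqr_ge0 eta) (g_bound t_range Fct); rewrite dist_t; lra.
have := ler_wpM2l (ltW weight_gt0) step_le.
have -> : weight t * (2 * eta * X) = 2 * (eta * weight t) * X by ring.
have -> : weight t * (dist t - dist t.+1 + eta ^+ 2 * G ^+ 2)
    = weight t * (dist t - dist t.+1) + (eta * weight t) * 2 * (eta * G ^+ 2 / 2) by field.
rewrite eta_weight eta_G.
have := g_subgrad t_range Fct F_u; rewrite -/X; lra.
Qed.

Lemma ogd_regret_le :
  \sum_(1 <= t < T.+1) (loss t (c t) - loss t u) <= 3 / 2 * G * D * Num.sqrt T%:R.
Proof.
case: (posnP T) => [-> | T_gt0]; first by rewrite big_geq // sqrtr0 mulr0.
apply: le_trans (ler_sum_nat (fun t (t_range : (1 <= t < T.+1)%N) => ogd_round t_range)) _.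
rewrite big_split /= -mulr_sumr.
have weight_ge0 t : 0 <= weight t by rewrite divr_ge0 ?mulr_ge0 ?sqrtr_ge0 ?ltW.
have weight_nondecr t : weight t <= weight t.+1.
  by rewrite ler_pM2r ?invr_gt0 ?mulr_gt0 // ler_pM2l // ler_sqrt ?ler0n // ler_nat.
have dist_le t : (1 <= t <= T)%N -> dist t <= D ^+ 2.
  by move=> t_range; rewrite /dist; case/andP: (t_range) => _ ->; apply: F_diam (ogd_feasible _) F_u.
have := sum_weighted_telescope T_gt0 (weight_ge0 1%N) weight_nondecr dist_le.
have -> : dist T.+1 = 0 by rewrite /dist ltnn.
have -> : weight T * (D ^+ 2 - 0) = G * D * Num.sqrt T%:R / 2 by rewrite /weight; field; rewrite gt_eqF.
have DG_ge0 : 0 <= D * G / 2 by rewrite divr_ge0 ?mulr_ge0 ?ltW.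
have := ler_wpM2l DG_ge0 (sum_inv_sqrt_le R T); lra.
Qed.

End OnlineGradientDescent.

Lemma Gconst_Dconst_le (R : realType) (N K : nat) (cM : nat -> R) (rmax pmax : R) :
  0 <= CMtot K cM -> 0 <= Num.max rmax pmax ->
  Gconst N rmax pmax * Dconst N K cM
    <= 2 * Num.sqrt (N%:R / 2) * (CMtot K cM * Num.max rmax pmax).
Proof.
move=> CM_ge0 M_ge0; rewrite /Gconst /Dconst.
set CM := CMtot K cM; set M := Num.max rmax pmax.
have s2 : Num.sqrt 2 * Num.sqrt 2 = 2 :> R by rewrite -expr2 sqr_sqrtr.
case: eqP => [-> | _].
  set y := Num.sqrt (1%:R / 2 : R).
  have y_ge0 : 0 <= y by apply: sqrtr_ge0.
  have y2 : y ^+ 2 = 1 / 2 by rewrite sqr_sqrtr // divr_ge0.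
  have : 0 <= CM * M by rewrite mulr_ge0.
  rewrite sqrtr1; nra.
have -> : Num.sqrt (N%:R : R) = Num.sqrt (N%:R / 2) * Num.sqrt 2.
  by rewrite -sqrtrM ?divfK ?pnatr_eq0 // divr_ge0.
have -> : Num.sqrt (N%:R / 2) * Num.sqrt 2 * M * (Num.sqrt 2 * CM)
    = (Num.sqrt 2 * Num.sqrt 2) * Num.sqrt (N%:R / 2) * (CM * M) by ring.
by rewrite s2.
Qed.

Lemma ogd_bound_le (R : realType) (N K T : nat) (cM : nat -> R) (rmax pmax : R) :
  0 <= CMtot K cM -> 0 <= Num.max rmax pmax ->
  3 / 2 * Gconst N rmax pmax * Dconst N K cM * Num.sqrt T%:R
    <= 3 * CMtot K cM * Num.sqrt (T%:R * N%:R / 2) * Num.max rmax pmax.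
Proof.
move=> CM_ge0 M_ge0; rewrite -[_ * _ / 2]mulrA sqrtrM ?ler0n //.
have := ler_wpM2r (sqrtr_ge0 (T%:R : R)) (Gconst_Dconst_le N CM_ge0 M_ge0).
lra.
Qed.

Theorem theorem5 (R : realType) (K N T : nat) (cM : nat -> R) (rmax pmax : R)
  (r : nat -> nat -> R) (p eps : nat -> 'I_N -> R) (c : nat -> 'I_N -> R) :
  (0 < K)%N -> (0 < N)%N -> (0 < T)%N ->
  (forall k, (k < K)%N -> 0 < cM k) ->
  (forall t k, (1 <= t <= T)%N -> (k.+1 < K)%N -> r t k < r t k.+1) ->
  (forall t k, (1 <= t <= T)%N -> (k < K)%N -> 0 <= r t k <= rmax) ->
  (forall t i, (1 <= t <= T)%N -> 0 <= p t i < pmax) ->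
  (forall t i, (1 <= t <= T)%N -> 0 <= eps t i <= 1) ->
  Fc K cM (c 1%N) ->
  (forall t, (1 <= t < T)%N ->
     is_proj (Fc K cM)
       (fun i => c t i - eta N K cM rmax pmax t * subgrad K cM (r t) (eps t) (p t) (c t) i)
       (c t.+1)) ->
  (forall c' : 'I_N -> R, Fc K cM c' ->
     \sum_(1 <= t < T.+1) cost K cM (r t) (eps t) (p t) (c t)
     - \sum_(1 <= t < T.+1) cost K cM (r t) (eps t) (p t) c'
     <= 3 / 2 * Gconst N rmax pmax * Dconst N K cM * Num.sqrt (T%:R))
  /\ 3 / 2 * Gconst N rmax pmax * Dconst N K cM * Num.sqrt (T%:R)
     <= 3 * CMtot K cM * Num.sqrt (T%:R * N%:R / 2) * Num.max rmax pmax.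
Proof.
move=> K_gt0 N_gt0 T_gt0 cM_gt0 r_incr r_bnd p_bnd eps01 Fc_c1 c_step.
have cM_ge0 k : (k < K)%N -> 0 <= cM k by move/cM_gt0/ltW.
have p_le t i : (1 <= t <= T)%N -> 0 <= p t i <= pmax.
  by move=> t_range; case/andP: (p_bnd t i t_range) => -> /ltW.
have M_gt0 : 0 < Num.max rmax pmax.
  have /andP[p_ge0 p_lt] := p_bnd 1%N (Ordinal N_gt0) T_gt0.
  by rewrite lt_max (le_lt_trans p_ge0 p_lt) orbT.
have CM_gt0 := CMtot_gt0 K_gt0 cM_gt0.
have D_gt0 : 0 < Dconst N K cM by rewrite /Dconst; case: eqP; rewrite ?mulr_gt0 ?sqrtr_gt0.
have G_gt0 : 0 < Gconst N rmax pmax by rewrite mulr_gt0 ?sqrtr_gt0 ?ltr0n.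
have load t x : (1 <= t <= T)%N -> Fc K cM x -> dot (eps t) x <= CMtot K cM.
  by move=> t_range Fx; apply: Fc_load_le Fx (eps01 t ^~ t_range).
split; last exact: ogd_bound_le (ltW CM_gt0) (ltW M_gt0).
move=> u Fc_u; rewrite -sumrB.
apply: (ogd_regret_le (T := T) (loss := fun t => cost K cM (r t) (eps t) (p t))
  (g := fun t => subgrad K cM (r t) (eps t) (p t) (c t))
  (@Fc_convex R N K cM) D_gt0 G_gt0 _ Fc_c1 c_step _ _ Fc_u).
- exact: Fc_diam.
- move=> t t_range Fct; apply: (sqnorm_subgrad_le K_gt0 (load _ _ t_range Fct)).
  + by move=> k; apply: r_bnd.
  + by move=> i; apply: p_le.
  + by move=> i; apply: eps01.
- move=> t x t_range Fct Fx.
  apply: (cost_subgrad_ineq cM_ge0 _ (p t) K_gt0 (load _ _ t_range Fct) (load _ _ t_range Fx)).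
  by move=> k k_lt; rewrite ltW ?r_incr.
Qed.
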